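(* Let $a:\mathbb{R}\to\mathbb{R}$ be such that (C1) $a$ is continuous, and (C2) for every $T\in\mathbb{R}^+$ there exists $\varepsilon_T>0$ with $a(s)\ge\varepsilon_T$ for all $s\le T$. Define $Y_N(t)=\int_{-\infty}^{Nt}\exp\!\big(-\int_u^{Nt}a(\tfrac{s}{N})\,ds\big)\,L(du)$, $t\in\mathbb{R}$, $N\in\mathbb{N}$. Then $\{Y_N(t)\}_{N\in\mathbb{N}}$ is locally stationary with kernels $g_N^0(Nt,v)=\mathbb{1}_{\{v\ge0\}}\exp\!\big(-\int_{-v}^0 a(\tfrac{s}{N}+t)ds\big)$, limiting kernel $g(t,u)=\mathbb{1}_{\{u\ge0\}}e^{-a(t)u}$ and limiting transfer function $A(t,\mu)=\int_{\mathbb{R}}e^{-i\mu u}\mathbb{1}_{\{u\ge0\}}e^{-a(t)u}\,du$.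
   Context: $L$ is a two-sided real Lévy process ($L(t)=L_1(t)\mathbb{1}_{\{t\ge0\}}-L_2(-t)\mathbb{1}_{\{t<0\}}$, $L_1,L_2$ independent copies of a Lévy process) with $E[L(1)]=0$ and $E[L(1)^2]<\infty$; integrals are $L^2$-integrals. A sequence $\{Y_N(t),t\in\mathbb{R}\}_{N\in\mathbb{N}}$ is locally stationary if $Y_N(t)=\int_{\mathbb{R}}g_N^0(Nt,Nt-u)L(du)$ for all $t,N$, where $g_N^0:\mathbb{R}^2\to\mathbb{R}$, $g_N^0(Nt,\cdot)\in L^2(\mathbb{R})$, and there is $g:\mathbb{R}^2\to\mathbb{R}$ such that $t\mapsto g(t,\cdot)$ is continuous into $L^2(\mathbb{R})$ and $g_N^0(Nt,\cdot)\to g(t,\cdot)$ in $L^2(\mathbb{R})$ for every $t$; equivalently in the frequency domain with transfer functions given by the Fourier transforms $A_N^0(Nt,\mu)=\int e^{-i\mu u}g_N^0(Nt,u)du$, $A(t,\mu)=\int e^{-i\mu u}g(t,u)du$. *)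

From HB Require Import structures.
From mathcomp Require Import all_boot all_order all_algebra.
From mathcomp Require Import all_classical all_reals all_analysis.
Set Implicit Arguments. Unset Strict Implicit. Unset Printing Implicit Defensive.
Import Order.TTheory GRing.Theory Num.Theory.
Import numFieldNormedType.Exports.
Local Open Scope classical_set_scope.
Local Open Scope ring_scope.

Notation leb R := (@lebesgue_measure R).

Definition in_L2 (R : realType) (f : R -> R) : Prop :=
  measurable_fun setT f /\
  (\int[leb R]_x ((f x ^+ 2)%:E) < +oo)%E.

Definition L2dist2 (R : realType) (f h : R -> R) : \bar R :=
  (\int[leb R]_x (((f x - h x) ^+ 2)%:E))%E.

(* Local stationarity (paper's definition), the L^2 stochastic integral
   w.r.t. the two-sided Levy process L being given abstractly as a map
   Lint : (R -> R) -> Omega_valued random variable, f |-> \int f(u) L(du). *)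
Definition locally_stationary (R : realType) (RV : Type)
  (Lint : (R -> R) -> RV) (Y : nat -> R -> RV)
  (g0 : nat -> R -> R -> R) (g : R -> R -> R) : Prop :=
  (forall (N : nat) (t : R), (0 < N)%N ->
      Y N t = Lint (fun u => g0 N (N%:R * t) (N%:R * t - u))) /\
  (forall (N : nat) (t : R), (0 < N)%N -> in_L2 (g0 N (N%:R * t))) /\
  (forall t : R, in_L2 (g t)) /\
  (forall t : R, L2dist2 (g s) (g t) @[s --> t] --> 0%E) /\
  (forall t : R, L2dist2 (g0 N (N%:R * t)) (g t) @[N --> \oo] --> 0%E).

Definition Y_OU (R : realType) (RV : Type) (Lint : (R -> R) -> RV)
  (a : R -> R) (N : nat) (t : R) : RV :=
  Lint (fun u => if u <= N%:R * t then
                   expR (- Rintegral (leb R) `[u, N%:R * t] (fun s => a (s / N%:R)))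
                 else 0).

(* g_N^0(Nt, v) = 1_{v >= 0} exp(-\int_{-v}^0 a(s/N + t) ds); written as a
   function of x = Nt, so t = x / N *)
Definition g0_OU (R : realType) (a : R -> R) (N : nat) (x v : R) : R :=
  if 0 <= v then
    expR (- Rintegral (leb R) `[- v, 0] (fun s => a (s / N%:R + x / N%:R)))
  else 0.

Definition g_OU (R : realType) (a : R -> R) (t u : R) : R :=
  if 0 <= u then expR (- (a t * u)) else 0.

From HB Require Import structures.
From mathcomp Require Import all_boot all_order all_algebra.
From mathcomp Require Import all_classical all_reals all_analysis.
From mathcomp Require Import ring lra measurable_realfun.
Import Order.TTheory GRing.Theory Num.Theory.
Import numFieldNormedType.Exports.
Set Implicit Arguments. Unset Strict Implicit. Unset Printing Implicit Defensive.
Local Open Scope ring_scope.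
Local Open Scope classical_set_scope.

(* Idea: thanks to the lower bound (C2), on every half line (-oo, T] the rate a
   is bounded below by some eps > 0, so all kernels that occur are dominated by
   the envelope u |-> 1_{u>=0} e^{-eps u}, which is square integrable (it is a
   multiple of the exponential density).  Every L^2 statement then follows from
   dominated convergence against this envelope.  The file is organised as:
   - the exponential envelope exp_env and its properties;
   - L^2 consequences of domination by a square-integrable function;
   - integrals over segments [-v, 0]: translation and the limit
     \int_{-v}^0 f(s/N + t) ds --> f(t) v, which uses continuity (C1);
   - kernels v |-> 1_{v>=0} exp(-\int_{-v}^0 h), of which g_N^0 is an instance;
   - the five clauses of local stationarity for the OU kernels, collected in
     the final theorem. *)

Lemma sqr_le_of_norm_le (R : realDomainType) (x y : R) :
  `|x| <= y -> x ^+ 2 <= y ^+ 2.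
Proof.
move=> xy; rewrite -real_normK ?num_real // ler_pXn2r // nnegrE //.
exact: le_trans xy.
Qed.

Lemma sqr_diff_le (R : realDomainType) (x y c : R) :
  `|x| <= c -> `|y| <= c -> (x - y) ^+ 2 <= 4 * c ^+ 2.
Proof.
move=> xc yc; have -> : 4 * c ^+ 2 = (c + c) ^+ 2 by ring.
by apply: sqr_le_of_norm_le; apply: le_trans (ler_normB _ _) _; exact: lerD.
Qed.

Section exponential_envelope.
Context {R : realType}.
Local Notation mu := (@lebesgue_measure R).

Definition exp_env (c u : R) : R := if 0 <= u then expR (- (c * u)) else 0.

Lemma exp_env_ge0 c u : 0 <= exp_env c u.
Proof. by rewrite /exp_env; case: ifP => _ //; exact: expR_ge0. Qed.

Lemma exp_env_le c c' u : c <= c' -> exp_env c' u <= exp_env c u.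
Proof.
move=> cc'; rewrite /exp_env; case: ifP => // u0.
by rewrite ler_expR lerN2 ler_wpM2r.
Qed.

Lemma exp_env_measurable c : measurable_fun setT (exp_env c).
Proof.
apply: measurable_fun_ifT; [exact: measurable_fun_ler| |exact: measurable_cst].
apply: measurableT_comp; first exact: measurable_expR.
by apply: measurable_funN; exact: measurable_funM.
Qed.

Lemma exp_env_sqr c u : exp_env c u ^+ 2 = exp_env (2 * c) u.
Proof.
rewrite /exp_env; case: ifP => _; last by rewrite expr0n.
by rewrite expr2 -expRD; congr expR; ring.
Qed.

Lemma exp_env_pdf c u : 0 < c -> exp_env c u = exponential_pdf c u / c.
Proof.
move=> c0; rewrite /exp_env; case: ifPn => u0.
  by rewrite exponential_pdfE // [_ * expR _]mulrC mulfK ?gt_eqF // mulNr.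
by rewrite lt0_exponential_pdf ?mul0r // ltNge.
Qed.

Lemma exp_env_integrable c : 0 < c -> mu.-integrable setT (EFin \o exp_env c).
Proof.
move=> c0; apply: (eq_integrable measurableT _ _ _
  (integrableZl measurableT c^-1 (integrable_exponential_pdf c0))) => u _ /=.
by rewrite -EFinM (exp_env_pdf _ c0) mulrC.
Qed.

Lemma exp_env_L2 c : 0 < c -> in_L2 (exp_env c).
Proof.
move=> c0; split; first exact: exp_env_measurable.
suff -> : (\int[mu]_u (exp_env c u ^+ 2)%:E =
           \int[mu]_u `|(EFin \o exp_env (2 * c)) u|)%E.
  by case/integrableP: (exp_env_integrable (mulr_gt0 (ltr0Sn R 1) c0)).
by apply: eq_integral => u _; rewrite exp_env_sqr /= ger0_norm // exp_env_ge0.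
Qed.

Lemma exp_env_cvg (c_ : nat -> R) c u : c_ n @[n --> \oo] --> c ->
  exp_env (c_ n) u @[n --> \oo] --> exp_env c u.
Proof.
move=> cc; rewrite /exp_env; case: ifP => _; last exact: cvg_cst.
apply: continuous_cvg; first exact: continuous_expR.
by apply: cvgN; apply: cvgM => //; exact: cvg_cst.
Qed.

End exponential_envelope.

Section L2_domination.
Context {R : realType}.
Local Notation mu := (@lebesgue_measure R).
Variable b : R -> R.
Hypothesis b_L2 : in_L2 b.

Let four_sqr_integrable : mu.-integrable setT (fun u => (4 * b u ^+ 2)%:E).
Proof.
case: b_L2 => mb ib.
have ib2 : mu.-integrable setT (fun u => (b u ^+ 2)%:E).
  apply/integrableP; split; first by apply/measurable_EFinP; exact: measurable_funX.
  by under eq_integral => u _ do rewrite abse_EFin ger0_norm ?sqr_ge0 //.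
apply: (eq_integrable measurableT _ _ _ (integrableZl measurableT 4 ib2)) => u _.
by rewrite /= -EFinM.
Qed.

Let sqr_diff_dominated (f h : R -> R) u : `|f u| <= b u -> `|h u| <= b u ->
  (`|((f u - h u) ^+ 2)%:E| <= `|(4 * b u ^+ 2)%:E|)%E.
Proof.
move=> fb hb; rewrite !abse_EFin lee_fin [leLHS]ger0_norm ?sqr_ge0 //.
rewrite [leRHS]ger0_norm; last by rewrite mulr_ge0 // sqr_ge0.
exact: sqr_diff_le.
Qed.

Lemma L2_dominated (f : R -> R) : measurable_fun setT f ->
  (forall u, `|f u| <= b u) -> in_L2 f.
Proof.
move=> mf fb; split => //; case: b_L2 => mb; apply: le_lt_trans.
apply: ge0_le_integral => //.
- by move=> u _; rewrite lee_fin sqr_ge0.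
- by apply/measurable_EFinP; exact: measurable_funX.
- by apply/measurable_EFinP; exact: measurable_funX.
- by move=> u _; rewrite lee_fin; exact: sqr_le_of_norm_le.
Qed.

Lemma L2dist2_fin_num (f h : R -> R) : measurable_fun setT f -> measurable_fun setT h ->
  (forall u, `|f u| <= b u) -> (forall u, `|h u| <= b u) ->
  L2dist2 f h \is a fin_num.
Proof.
move=> mf mh fb hb; apply: integrable_fin_num => //.
apply: le_integrable four_sqr_integrable => //; last by move=> u _; exact: sqr_diff_dominated.
by apply/measurable_EFinP; apply: measurable_funX; exact: measurable_funB.
Qed.

Lemma L2dist2_dominated_cvg (f_ : nat -> R -> R) (f : R -> R) :
  (forall n, measurable_fun setT (f_ n)) -> measurable_fun setT f ->
  (forall n u, `|f_ n u| <= b u) -> (forall u, `|f u| <= b u) ->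
  (forall u, f_ n u @[n --> \oo] --> f u) ->
  L2dist2 (f_ n) f @[n --> \oo] --> 0%E.
Proof.
move=> mf_ mf f_b fb f_f.
have msqr n : measurable_fun (setT : set (measurableTypeR R))
    (fun u : measurableTypeR R => ((f_ n u - f u) ^+ 2)%:E).
  have mf_f : measurable_fun setT (fun u => f_ n u - f u) by exact: measurable_funB.
  by apply/measurable_EFinP; exact: measurable_funX.
have sqr_cvg0 : {ae mu, forall u, setT u ->
    ((f_ n u - f u) ^+ 2)%:E @[n --> \oo] --> (0 : \bar R)}.
  apply: aeW => u _; apply/fine_cvgP; split; first exact: nearW.
  have -> : (0 : R) = (f u - f u) * (f u - f u) by rewrite subrr mul0r.
  by rewrite /comp; under eq_fun do rewrite expr2; apply: cvgM;
    apply: cvgB => //; exact: cvg_cst.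
have sqr_le : {ae mu, forall u n, setT u ->
    (`|((f_ n u - f u) ^+ 2)%:E| <= (4 * b u ^+ 2)%:E)%E}.
  apply: aeW => u n _; rewrite -[X in (_ <= X)%E]gee0_abs.
    exact: sqr_diff_dominated.
  by rewrite lee_fin mulr_ge0 // sqr_ge0.
have [_ _] := dominated_convergence measurableT msqr
  (measurable_cst (0 : \bar R)) sqr_cvg0 four_sqr_integrable sqr_le.
by rewrite integral0.
Qed.

End L2_domination.

Lemma continuous_rescale (R : realType) (f : R -> R) (N : nat) (c : R) :
  continuous f -> continuous (fun s : R => f (s / N%:R + c)).
Proof.
move=> cf s; apply: continuous_comp; last exact: cf.
by apply: cvgD; [apply: cvgM; [exact: cvg_id | exact: cvg_cst] | exact: cvg_cst].
Qed.

Section segment_integrals.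
Context {R : realType}.
Local Notation mu := (@lebesgue_measure R).

Lemma continuous_segment_integrable (f : R -> R) (p q : R) : continuous f ->
  mu.-integrable `[p, q] (EFin \o f).
Proof.
move=> cf; apply: continuous_compact_integrable; first exact: segment_compact.
by apply: continuous_subspaceT => z; exact: cf.
Qed.

Lemma segment_measure (v : R) : 0 <= v -> fine (mu `[- v, 0]) = v.
Proof.
move=> v0; rewrite lebesgue_measure_itv /=.
move: v0; rewrite le_eqVlt => /predU1P[<-|vp]; first by rewrite oppr0 lte_fin ltxx.
by rewrite lte_fin oppr_lt0 vp /= add0r opprK.
Qed.

Lemma translate_segment_integral (f : R -> R) (u c : R) : continuous f ->
  u <= c ->
  \int[mu]_(s in `[u, c]) f s = \int[mu]_(s in `[- (c - u), 0]) f (s + c).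
Proof.
move=> cf uc.
have dshift : (fun x : R => x + c)^`()%classic = cst 1.
  apply/funext => z; rewrite derive1E deriveD //.
  by rewrite derive_id derive_cst addr0.
have subst := @integration_by_substitution_increasing R (fun x : R => x + c) f
  (- (c - u)) 0.
rewrite dshift /= opprB subrK add0r in subst.
rewrite /Rintegral subst.
- rewrite opprB; congr fine; apply: eq_integral => s _.
  by rewrite /= mulr1.
- lra.
- by move=> x y _ _; rewrite ltrD2r.
- by move=> z _; exact: cst_continuous.
- exact: is_cvg_cst.
- exact: is_cvg_cst.
- split.
  + by move=> z _; apply: derivableD => //; exact: derivable_cst.
  + apply: cvg_at_right_filter; apply: cvgD; [exact: cvg_id | exact: cvg_cst].
  + apply: cvg_at_left_filter; apply: cvgD; [exact: cvg_id | exact: cvg_cst].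
- by apply: continuous_subspaceT => z; exact: cf.
Qed.

Lemma segment_integral_close (f g : R -> R) (v e : R) :
  continuous f -> continuous g -> 0 <= v ->
  (forall s, - v <= s -> s <= 0 -> `|f s - g s| <= e) ->
  `|\int[mu]_(s in `[- v, 0]) f s - \int[mu]_(s in `[- v, 0]) g s| <= e * v.
Proof.
move=> cf cg v0 fg.
have int_f := continuous_segment_integrable (- v) 0 cf.
have int_g := continuous_segment_integrable (- v) 0 cg.
rewrite -RintegralB //; apply: le_trans (le_normr_Rintegral _ _) _ => //.
  exact: (integrableB _ int_f int_g).
rewrite -[X in _ <= e * X](segment_measure v0) -Rintegral_cst //.
apply: le_Rintegral => //.
- apply: continuous_segment_integrable => s.
  by apply: cvg_norm; apply: cvgB; [exact: cf | exact: cg].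
- exact: continuous_segment_integrable (fun _ => cvg_cst _).
- by move=> s; rewrite /= in_itv /= => /andP[]; exact: fg.
Qed.

(* As N --> oo, f(s/N + t) is uniformly close to f(t) on [-v, 0], hence
   \int_{-v}^0 f(s/N + t) ds --> f(t) v. *)
Lemma rescaled_segment_integral_cvg (f : R -> R) (t v : R) : continuous f ->
  0 <= v ->
  \int[mu]_(s in `[- v, 0]) f (s / N%:R + t) @[N --> \oo] --> f t * v.
Proof.
move=> cf v0; apply/cvgrPdist_le => e e0.
have e1 : 0 < e / (v + 1) by rewrite divr_gt0 // ltr_wpDl.
have /cvgrPdist_le /(_ _ e1) : f x @[x --> t] --> f t by exact: cf.
case/nbhs_ballP => d d0 ft_close.
near=> N.
have N_gt0 : (0 : R) < N%:R by near: N; exists 1%N => // n; rewrite ltr0n.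
have vdN : v / d < N%:R by near: N; exact: nbhs_infty_gtr.
rewrite -{1}(segment_measure v0) -Rintegral_cst //.
apply: le_trans (segment_integral_close _ _ v0 _) _.
- by move=> x; exact: cvg_cst.
- exact: continuous_rescale.
- move=> s vs s0; apply: ft_close; rewrite /ball /=.
  have -> : t - (s / N%:R + t) = - s / N%:R by ring.
  rewrite normrM normfV (gtr0_norm N_gt0) normrN ltr_pdivrMr //.
  rewrite ltr_pdivrMr // mulrC in vdN.
  by apply: le_lt_trans vdN; rewrite ler_norml vs (le_trans s0 v0).
rewrite mulrAC ler_pdivrMr ?ltr_wpDl //.
by rewrite ler_pM2l // lerDl.
Unshelve. all: by end_near. Qed.

End segment_integrals.

Section segment_kernel.
Context {R : realType}.
Local Notation mu := (@lebesgue_measure R).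

Definition segment_kernel (h : R -> R) (v : R) : R :=
  if 0 <= v then expR (- \int[mu]_(s in `[- v, 0]) h s) else 0.

Lemma segment_kernel_cvg (h_ : nat -> R -> R) (c v : R) :
  (0 <= v -> \int[mu]_(s in `[- v, 0]) h_ n s @[n --> \oo] --> c * v) ->
  segment_kernel (h_ n) v @[n --> \oo] --> exp_env c v.
Proof.
rewrite /segment_kernel /exp_env; case: ifP => v0 h_cvg; last exact: cvg_cst.
apply: continuous_cvg; first exact: continuous_expR.
by apply: cvgN; exact: h_cvg.
Qed.

Variables (h : R -> R) (eps : R).
Hypothesis h_cont : continuous h.
Hypothesis h_ge : forall s, s <= 0 -> eps <= h s.

Lemma segment_integral_ge (v : R) : 0 <= v ->
  eps * v <= \int[mu]_(s in `[- v, 0]) h s.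
Proof.
move=> v0; rewrite -{1}(segment_measure v0) -Rintegral_cst //.
apply: le_Rintegral => //.
- exact: continuous_segment_integrable (fun _ => cvg_cst _).
- exact: continuous_segment_integrable.
- by move=> s; rewrite /= in_itv /= => /andP[_ s0]; exact: h_ge.
Qed.

Lemma segment_kernel_le (v : R) : `|segment_kernel h v| <= exp_env eps v.
Proof.
rewrite /segment_kernel /exp_env; case: ifP => v0; last by rewrite normr0.
by rewrite ger0_norm ?expR_ge0 // ler_expR lerN2 segment_integral_ge.
Qed.

Hypothesis eps_ge0 : 0 <= eps.

Lemma segment_integral_nondecreasing :
  {homo (fun v => \int[mu]_(s in `[- v, 0]) h s) : v w / v <= w}.
Proof.
have h_ge0 s : s <= 0 -> 0 <= h s by move=> s0; exact: le_trans eps_ge0 (h_ge s0).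
move=> v w vw /=; have [v_lt0|v_ge0] := ltP v 0.
  rewrite set_itv_ge ?Rintegral_set0; last by rewrite bnd_simp -ltNge oppr_gt0.
  by apply: Rintegral_ge0 => s; rewrite /= in_itv /= => /andP[_ s0]; exact: h_ge0.
rewrite /Rintegral fine_le //.
- exact/integrable_fin_num/continuous_segment_integrable.
- exact/integrable_fin_num/continuous_segment_integrable.
apply: ge0_subset_integral => //.
- by case/integrableP: (continuous_segment_integrable (- w) 0 h_cont).
- by move=> s; rewrite /= in_itv /= => /andP[_ s0]; rewrite lee_fin; exact: h_ge0.
- by apply: subset_itvr; rewrite bnd_simp lerN2.
Qed.

Lemma segment_kernel_measurable : measurable_fun setT (segment_kernel h).
Proof.
apply: measurable_fun_ifT; [exact: measurable_fun_ler| |exact: measurable_cst].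
apply: nonincreasing_measurable => // v w vw.
by rewrite ler_expR lerN2; exact: segment_integral_nondecreasing.
Qed.

End segment_kernel.

Lemma scaled_timeK (R : realType) (N : nat) (t : R) : (0 < N)%N ->
  N%:R * t / N%:R = t.
Proof. by move=> N_gt0; rewrite mulrAC divff ?mul1r // pnatr_eq0 -lt0n. Qed.

(* Uniform bound on the rescaled time, valid also for N = 0. *)
Lemma scaled_time_le (R : realType) (N : nat) (t : R) :
  N%:R * t / N%:R <= `|t|.
Proof.
case: N => [|n]; first by rewrite mul0r mul0r normr_ge0.
by rewrite scaled_timeK // ler_norm.
Qed.

Section ou_kernels.
Context {R : realType}.
Variable a : R -> R.
Hypothesis a_cont : continuous a.
Hypothesis a_lower :
  forall T : R, 0 < T -> exists2 eps : R, 0 < eps & forall s, s <= T -> eps <= a s.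

Lemma a_lower_bound (T : R) :
  exists2 eps : R, 0 < eps & forall s, s <= T -> eps <= a s.
Proof.
have one_le : 1 <= Num.max T 1 by rewrite le_max lexx orbT.
have [eps eps_gt0 aT] := a_lower (lt_le_trans ltr01 one_le).
by exists eps => // s sT; apply: aT; rewrite le_max sT.
Qed.

Lemma g_OUE (t : R) : g_OU a t = exp_env (a t).
Proof. by []. Qed.

Lemma g0_OUE (N : nat) (x : R) :
  g0_OU a N x = segment_kernel (fun s => a (s / N%:R + x / N%:R)).
Proof. by []. Qed.

Lemma g_dominated (T eps t : R) : (forall s, s <= T -> eps <= a s) -> t <= T ->
  forall u, `|g_OU a t u| <= exp_env eps u.
Proof. by move=> aT tT u; rewrite g_OUE ger0_norm ?exp_env_ge0 // exp_env_le // aT. Qed.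

Lemma g0_dominated (N : nat) (T eps x : R) : 0 < eps ->
  (forall s, s <= T -> eps <= a s) -> x / N%:R <= T ->
  measurable_fun setT (g0_OU a N x) /\
  forall v, `|g0_OU a N x v| <= exp_env eps v.
Proof.
move=> eps_gt0 aT xT; rewrite g0_OUE.
have rate_cont := continuous_rescale (N := N) (c := x / N%:R) a_cont.
have rate_ge (s : R) : s <= 0 -> eps <= a (s / N%:R + x / N%:R).
  move=> s0; apply: aT; apply: le_trans xT; rewrite gerDr.
  by apply: mulr_le0_ge0 => //; rewrite invr_ge0.
split; first exact: segment_kernel_measurable rate_cont rate_ge (ltW eps_gt0).
exact: segment_kernel_le rate_cont rate_ge.
Qed.

(* Clause 1: Y_N(t) is the L-integral of g_N^0(Nt, Nt - u), by translating
   the inner integral from [u, Nt] to [-(Nt - u), 0]. *)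
Lemma Y_OU_kernel_representation (RV : Type) (Lint : (R -> R) -> RV)
    (N : nat) (t : R) :
  Y_OU Lint a N t = Lint (fun u => g0_OU a N (N%:R * t) (N%:R * t - u)).
Proof.
rewrite /Y_OU; congr Lint; apply/funext => u.
rewrite /g0_OU subr_ge0; case: ifP => // u_le.
rewrite (@translate_segment_integral _ (fun s => a (s / N%:R))) //; last first.
  move=> s; apply: continuous_comp; last exact: a_cont.
  by apply: cvgM; [exact: cvg_id | exact: cvg_cst].
by under eq_Rintegral => s _ do rewrite mulrDl.
Qed.

Lemma g0_L2 (N : nat) (t : R) : in_L2 (g0_OU a N (N%:R * t)).
Proof.
have [eps eps_gt0 aT] := a_lower_bound `|t|.
have [g0_meas g0_le] := g0_dominated eps_gt0 aT (scaled_time_le N t).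
exact: (L2_dominated (exp_env_L2 eps_gt0) g0_meas g0_le).
Qed.

Lemma g_L2 (t : R) : in_L2 (g_OU a t).
Proof.
have [eps eps_gt0 aT] := a_lower_bound t.
apply: (L2_dominated (exp_env_L2 eps_gt0) _ (g_dominated aT (lexx t))).
by rewrite g_OUE; exact: exp_env_measurable.
Qed.

(* Clause 4: t |-> g(t, .) is continuous in L^2.  Along a sequence u_n --> t
   we use its truncation min(u_n, t + 1), which agrees with u_n eventually and
   keeps all rates above the lower bound of a on (-oo, t + 1]. *)
Lemma g_L2_continuous (t : R) :
  L2dist2 (g_OU a s) (g_OU a t) @[s --> t] --> 0%E.
Proof.
apply/fine_cvgP; split.
  apply: nearW => s; have [eps eps_gt0 aT] := a_lower_bound (Num.max s t).
  apply: (L2dist2_fin_num (exp_env_L2 eps_gt0)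
    (exp_env_measurable (a s)) (exp_env_measurable (a t)));
    by apply: g_dominated aT _; rewrite le_max lexx ?orbT.
apply/(@cvg_nbhsP _ R^o) => u u_t.
have [eps eps_gt0 aT] := a_lower_bound (t + 1).
pose w n := Num.min (u n) (t + 1).
have u_w : \forall n \near \oo, u n = w n.
  have t_lt : t < t + 1 by rewrite ltrDl.
  have u_lt : \forall n \near \oo, u n < t + 1 :=
    u_t [set y : R | y < t + 1] (lt_nbhsl t_lt).
  apply: filterS u_lt => n un.
  by rewrite /w min_l // ltW.
have w_t : w n @[n --> \oo] --> t by apply: cvg_trans (near_eq_cvg u_w) u_t.
have w_le n : w n <= t + 1 by rewrite /w ge_min lexx orbT.
have t_le : t <= t + 1 by rewrite lerDl.
have a_w : a (w n) @[n --> \oo] --> a t.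
  by apply: continuous_cvg => //; exact: a_cont.
have /fine_cvgP[_] := L2dist2_dominated_cvg (exp_env_L2 eps_gt0)
  (fun n => exp_env_measurable (a (w n))) (exp_env_measurable (a t))
  (fun n => g_dominated aT (w_le n)) (g_dominated aT t_le)
  (fun v => exp_env_cvg (u := v) a_w).
apply: cvg_trans; apply: near_eq_cvg.
by apply: filterS u_w => n /= ->.
Qed.

(* Clause 5: g_N^0(Nt, .) --> g(t, .) in L^2, by dominated convergence with
   the pointwise limit of the exponents from rescaled_segment_integral_cvg. *)
Lemma g0_L2_cvg (t : R) :
  L2dist2 (g0_OU a N (N%:R * t)) (g_OU a t) @[N --> \oo] --> 0%E.
Proof.
have [eps eps_gt0 aT] := a_lower_bound `|t|.
have g0_dom N := g0_dominated eps_gt0 aT (scaled_time_le N t).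
apply: (L2dist2_dominated_cvg (exp_env_L2 eps_gt0)).
- by move=> N; case: (g0_dom N).
- by rewrite g_OUE; exact: exp_env_measurable.
- by move=> N; case: (g0_dom N).
- exact: g_dominated aT (ler_norm t).
move=> v; rewrite g_OUE.
apply: (@segment_kernel_cvg _ (fun N s => a (s / N%:R + N%:R * t / N%:R))) => v0.
move: (rescaled_segment_integral_cvg (t := t) a_cont v0); apply: cvg_trans.
apply: near_eq_cvg; near=> N.
by rewrite /= scaled_timeK //; near: N; exists 1%N.
Unshelve. all: by end_near. Qed.

End ou_kernels.

Theorem proposition4 (R : realType) (RV : Type) (Lint : (R -> R) -> RV)
  (a : R -> R)
  (C1 : continuous a)
  (C2 : forall T : R, 0 < T -> exists2 eps : R, 0 < eps & forall s, s <= T -> eps <= a s) :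
  locally_stationary Lint (Y_OU Lint a) (g0_OU a) (g_OU a).
Proof.
split; [|split; [|split; [|split]]].
- by move=> N t _; exact: Y_OU_kernel_representation.
- by move=> N t _; exact: g0_L2.
- exact: g_L2 C2.
- exact: g_L2_continuous C1 C2.
- exact: g0_L2_cvg C1 C2.
Qed.
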